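(* Let $X,Y,P$ be Banach spaces, $F:X\times P\rightrightarrows Y$ and $G:X\rightrightarrows Y$ set-valued maps and $(\overline{x},\overline{p},\overline{y})\in X\times P\times Y$ with $\overline{y}\in F(\overline{x},\overline{p})$ and $-\overline{y}\in G(\overline{x})$. Let $S:P\rightrightarrows X$, $S(p)=\{x\in X: 0\in F(x,p)+G(x)\}$. Suppose: (i) $(F,G)$ is locally sum-stable around $(\overline{x},\overline{p},\overline{y},-\overline{y})$; (ii) $F(x,\cdot)$ is inner semicontinuous at $(\overline{p},\overline{y})$ for every $x$ in a neighborhood of $\overline{x}$; (iii) $F$ is Lipschitz-like with respect to $x$ uniformly in $p$ around $((\overline{x},\overline{p}),\overline{y})$; (iv) $F$ is metrically regular with respect to $p$ uniformly in $x$ around $((\overline{x},\overline{p}),\overline{y})$; (v) $G$ is Lipschitz-like around $(\overline{x},-\overline{y})$. Then $S$ is metrically regular around $(\overline{p},\overline{x})$ and \[ \operatorname{reg}S(\overline{p},\overline{x})\le\widehat{\operatorname{reg}}_pF((\overline{x},\overline{p}),\overline{y})\cdot\big[\widehat{\operatorname{lip}}_xF((\overline{x},\overline{p}),\overline{y})+\operatorname{lip}G(\overline{x},-\overline{y})\big]. \]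
   Context: $B$ open balls, $\mathbb{D}_Y$ closed unit ball, $d(x,A)=\inf_{a\in A}\|x-a\|$, $d(x,\emptyset)=\infty$; products carry the sum norm. Write $F_p=F(\cdot,p)$, $F_x=F(x,\cdot)$. $(F,G)$ is locally sum-stable around $(\overline{x},\overline{p},\overline{y},\overline{z})$ (where $\overline{y}\in F(\overline{x},\overline{p})$, $\overline{z}\in G(\overline{x})$) if for every $\varepsilon>0$ there is $\delta>0$ such that for every $(x,p)\in B(\overline{x},\delta)\times B(\overline{p},\delta)$ and every $w\in(F_p+G)(x)\cap B(\overline{y}+\overline{z},\delta)$ there exist $y\in F_p(x)\cap B(\overline{y},\varepsilon)$ and $z\in G(x)\cap B(\overline{z},\varepsilon)$ with $w=y+z$. A multifunction $T$ is inner semicontinuous at $(a,b)\in\operatorname{Gr}T$ if for every open $D\ni b$ there is a neighborhood $U$ of $a$ with $T(a')\cap D\neq\emptyset$ for all $a'\in U$. $F$ is Lipschitz-like with respect to $x$ uniformly in $p$ around $((\overline{x},\overline{p}),\overline{y})$ with constant $L$ if there are neighborhoods $U$ of $\overline{x}$, $V$ of $\overline{p}$, $W$ of $\overline{y}$ such that $F_p(x)\cap W\subset F_p(u)+L\|x-u\|\mathbb{D}_Y$ for all $x,u\in U$, $p\in V$; $\widehat{\operatorname{lip}}_xF((\overline{x},\overline{p}),\overline{y})$ is the infimum of such $L$. $F$ is metrically regular with respect to $p$ uniformly in $x$ around $((\overline{x},\overline{p}),\overline{y})$ with constant $L$ if there are such neighborhoods with $d(p,F_x^{-1}(y))\le L\,d(y,F_x(p))$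 for all $(x,p,y)\in U\times V\times W$; $\widehat{\operatorname{reg}}_pF((\overline{x},\overline{p}),\overline{y})$ is the infimum of such $L$. $T:A\rightrightarrows B$ is Lipschitz-like around $(\overline{a},\overline{b})$ with constant $L$ if there are neighborhoods $U$ of $\overline{a}$, $V$ of $\overline{b}$ with $T(a)\cap V\subset T(u)+L\|a-u\|\mathbb{D}_B$ for all $a,u\in U$ ($\operatorname{lip}T(\overline{a},\overline{b})$ the infimum of such $L$); $T$ is metrically regular around $(\overline{a},\overline{b})$ with constant $L$ if there are neighborhoods $U,V$ with $d(a,T^{-1}(b))\le L\,d(b,T(a))$ for all $(a,b)\in U\times V$ ($\operatorname{reg}T(\overline{a},\overline{b})$ the infimum of such $L$). *)

From HB Require Import structures.
From mathcomp Require Import all_boot all_order all_algebra.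
From mathcomp Require Import all_classical all_reals all_analysis.
Set Implicit Arguments. Unset Strict Implicit. Unset Printing Implicit Defensive.
Import Order.TTheory GRing.Theory Num.Theory.
Import numFieldNormedType.Exports.
Local Open Scope classical_set_scope.
Local Open Scope ring_scope.

(* Set-valued maps A ⇉ B are functions A -> set B. *)

Section Defs.
Variable R : realType.

(* d(x,A) = inf_{a in A} |x - a|, with d(x, emptyset) = +oo *)
Definition dist (V : normedModType R) (x : V) (A : set V) : \bar R :=
  ereal_inf [set (`|x - a|)%:E | a in A].

Definition lipschitz_like (A B : normedModType R) (T : A -> set B)
    (a0 : A) (b0 : B) (L : R) : Prop :=
  exists r : R, 0 < r /\
    forall a u : A, `|a - a0| < r -> `|u - a0| < r ->
    forall b : B, T a b -> `|b - b0| < r ->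
    exists b' : B, T u b' /\ `|b - b'| <= L * `|a - u|.

Definition lip (A B : normedModType R) (T : A -> set B) (a0 : A) (b0 : B)
  : \bar R :=
  ereal_inf [set L%:E | L in [set L : R | 0 <= L /\ lipschitz_like T a0 b0 L]].

Definition metreg (A B : normedModType R) (T : A -> set B)
    (a0 : A) (b0 : B) (L : R) : Prop :=
  exists r : R, 0 < r /\
    forall (a : A) (b : B), `|a - a0| < r -> `|b - b0| < r ->
    (dist a [set a' | T a' b] <= L%:E * dist b (T a))%E.

Definition reg (A B : normedModType R) (T : A -> set B) (a0 : A) (b0 : B)
  : \bar R :=
  ereal_inf [set L%:E | L in [set L : R | 0 <= L /\ metreg T a0 b0 L]].

(* F : X x P ⇉ Y, written curried: F x p *)
Definition lipschitz_like_x (X P Y : normedModType R) (F : X -> P -> set Y)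
    (x0 : X) (p0 : P) (y0 : Y) (L : R) : Prop :=
  exists r : R, 0 < r /\
    forall (x u : X) (p : P), `|x - x0| < r -> `|u - x0| < r -> `|p - p0| < r ->
    forall y : Y, F x p y -> `|y - y0| < r ->
    exists y' : Y, F u p y' /\ `|y - y'| <= L * `|x - u|.

Definition lip_x (X P Y : normedModType R) (F : X -> P -> set Y)
    (x0 : X) (p0 : P) (y0 : Y) : \bar R :=
  ereal_inf [set L%:E | L in [set L : R | 0 <= L /\ lipschitz_like_x F x0 p0 y0 L]].

Definition metreg_p (X P Y : normedModType R) (F : X -> P -> set Y)
    (x0 : X) (p0 : P) (y0 : Y) (L : R) : Prop :=
  exists r : R, 0 < r /\
    forall (x : X) (p : P) (y : Y),
    `|x - x0| < r -> `|p - p0| < r -> `|y - y0| < r ->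
    (dist p [set p' | F x p' y] <= L%:E * dist y (F x p))%E.

Definition reg_p (X P Y : normedModType R) (F : X -> P -> set Y)
    (x0 : X) (p0 : P) (y0 : Y) : \bar R :=
  ereal_inf [set L%:E | L in [set L : R | 0 <= L /\ metreg_p F x0 p0 y0 L]].

Definition inner_sc (A B : normedModType R) (T : A -> set B) (a0 : A) (b0 : B)
  : Prop :=
  forall D : set B, open D -> D b0 ->
    \forall a \near a0, (T a `&` D) !=set0.

Definition sum_stable (X P Y : normedModType R) (F : X -> P -> set Y)
    (G : X -> set Y) (x0 : X) (p0 : P) (y0 z0 : Y) : Prop :=
  forall eps : R, 0 < eps -> exists delta : R, 0 < delta /\
    forall (x : X) (p : P), `|x - x0| < delta -> `|p - p0| < delta ->
    forall w : Y, (exists y z, F x p y /\ G x z /\ w = y + z) ->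
      `|w - (y0 + z0)| < delta ->
    exists y z, F x p y /\ `|y - y0| < eps /\ G x z /\ `|z - z0| < eps /\
      w = y + z.

Definition sol_map (X P Y : normedModType R) (F : X -> P -> set Y)
    (G : X -> set Y) : P -> set X :=
  fun p => [set x | exists y z, F x p y /\ G x z /\ y + z = 0].

End Defs.

From HB Require Import structures.
From mathcomp Require Import all_boot all_order all_algebra.
From mathcomp Require Import all_classical all_reals all_analysis.
From mathcomp Require Import lra.
Import Order.TTheory GRing.Theory Num.Theory.
Import numFieldNormedType.Exports.
Local Open Scope classical_set_scope.
Local Open Scope ring_scope.
Set Implicit Arguments. Unset Strict Implicit. Unset Printing Implicit Defensive.

(* Let x' be a solution for p, i.e. y + z = 0 with y in F(x',p), z in G(x').
   Sum-stability replaces (y,z) by a pair (y2,z2), still summing to 0, close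
   to (ybar,-ybar), where the Lipschitz-like properties apply: they move it to
   y1 in F(x,p) and z1 in G(x) with |-z1 - y1| <= (lip_x F + lip G)|x - x'|.
   Metric regularity of F(x,.) at the value -z1 then gives p' with
   -z1 in F(x,p'), so x in S(p'), and |p - p'| <= reg_p F |-z1 - y1|.
   Solutions x' far from x are handled by the estimate at the reference
   solution x0 in S(p0). *)

Section Distance.
Variables (R : realType) (V : normedModType R).
Implicit Types (x a : V) (A B : set V).

Lemma dist_le x a A : A a -> (dist x A <= (`|x - a|)%:E)%E.
Proof. by move=> Aa; apply: ereal_inf_lbound; exists a. Qed.

Lemma dist_lt_exists x A (c : R) :
  (dist x A < c%:E)%E -> exists2 a, A a & `|x - a| < c.
Proof. by move=> /ereal_inf_lt [_ [a Aa <-]]; rewrite lte_fin; exists a. Qed.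

Lemma le_dist x A B : A `<=` B -> (dist x B <= dist x A)%E.
Proof. by move=> AB; apply/ereal_infP => _ [a Aa <-]; apply/dist_le/AB. Qed.

Lemma le_mul_dist x A (L : R) (D : \bar R) : 0 < L ->
  (forall a, A a -> (D <= (L * `|x - a|)%:E)%E) -> (D <= L%:E * dist x A)%E.
Proof.
move=> L0 DA; rewrite /dist -ereal_inf_pZl //.
by apply/ereal_infP => _ [_ [a Aa <-] <-]; rewrite -EFinM; apply: DA.
Qed.

End Distance.

Lemma metreg_of_local_bound (R : realType) (A B : normedModType R)
    (T : A -> set B) (a0 : A) (b0 : B) (K r eps : R) :
  0 <= K -> 0 < r -> 0 < eps -> T a0 b0 ->
  (forall (a : A) (b b' : B), `|a - a0| < r -> `|b - b0| < r ->
     `|b' - b0| < r -> T a b' ->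
     (dist a [set a' | T a' b] <= (K * `|b - b'|)%:E)%E) ->
  metreg T a0 b0 (K + eps).
Proof.
move=> K0 r0 eps0 Tab0 bound.
pose s := Num.min (r / 2) ((K + eps) * r / (2 * (K + 2))).
have s0 : 0 < s by rewrite lt_min !divr_gt0 ?mulr_gt0 //; lra.
have sr : s <= r / 2 by rewrite ge_min lexx.
have sK : s * (2 * (K + 2)) <= (K + eps) * r.
  by rewrite -ler_pdivlMr ?ge_min ?lexx ?orbT //; lra.
exists s; split=> // a b ha hb.
apply: le_mul_dist; first lra.
move=> b' Tab'; have [near_b'|far_b'] := ltP `|b - b'| (r / 2).
  have hb' : `|b' - b0| < r.
    by rewrite (le_lt_trans (ler_distD b b' b0)) // distrC; lra.
  apply: le_trans (bound a b b' ltac:(lra) ltac:(lra) hb' Tab') _.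
  by rewrite lee_fin ler_wpM2r //; lra.
have at_ref := bound a0 b b0 ltac:(by rewrite subrr normr0)
  ltac:(lra) ltac:(by rewrite subrr normr0) Tab0.
(* b' far from b: go through the reference point, |a - a'| < (K + 2) s. *)
have /dist_lt_exists [a' Ta'b ha'] : (dist a0 [set a' | T a' b] < (K * s + s)%:E)%E.
  apply: le_lt_trans at_ref _; rewrite lte_fin ltr_pwDr // ler_wpM2l //; lra.
apply: le_trans (dist_le _ Ta'b) _; rewrite lee_fin.
have := ler_distD a0 a a'; rewrite distrC.
have : (K + eps) * (r / 2) <= (K + eps) * `|b - b'| by rewrite ler_wpM2l //; lra.
nra.
Qed.

Lemma ereal_inf_le_mul_add (R : realType) (A B C D : set R) :
  A !=set0 -> B !=set0 -> C !=set0 ->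
  lbound A 0 -> lbound B 0 -> lbound C 0 ->
  (forall k l m e, A k -> B l -> C m -> 0 < e -> D (k * (l + m) + e)) ->
  (ereal_inf (EFin @` D) <=
     ereal_inf (EFin @` A) * (ereal_inf (EFin @` B) + ereal_inf (EFin @` C)))%E.
Proof.
move=> nA nB nC lA lB lC inD.
rewrite (ereal_inf_EFin (ex_intro _ 0 lA) nA) (ereal_inf_EFin (ex_intro _ 0 lB) nB).
rewrite (ereal_inf_EFin (ex_intro _ 0 lC) nC).
have [a0 b0 c0] : [/\ 0 <= inf A, 0 <= inf B & 0 <= inf C].
  by split; apply: lb_le_inf.
rewrite -EFinD -EFinM; apply/lee_addgt0Pr => dl dl0.
(* For t <= 1, (inf A + t) (inf B + inf C + 2 t) + t <= inf A (inf B + inf C) + t N. *)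
pose N := 2 * inf A + inf B + inf C + 3 + dl.
pose t := dl / N.
have t0 : 0 < t by rewrite divr_gt0 // /N; lra.
have tN : t * N = dl by rewrite mulfVK // /N; lra.
have [k Ak hk] := inf_adherent t0 (conj nA (ex_intro _ 0 lA)).
have [l Bl hl] := inf_adherent t0 (conj nB (ex_intro _ 0 lB)).
have [m Cm hm] := inf_adherent t0 (conj nC (ex_intro _ 0 lC)).
have [k0 l0 m0] : [/\ 0 <= k, 0 <= l & 0 <= m] by split; [apply: lA|apply: lB|apply: lC].
apply: (@le_trans _ _ (k * (l + m) + t)%:E).
  by apply: ereal_inf_lbound; exists (k * (l + m) + t) => //; apply: inD.
rewrite -EFinD lee_fin.
have : k * (l + m) <= (inf A + t) * (l + m) by rewrite ler_wpM2r //; lra.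
have : (inf A + t) * (l + m) <= (inf A + t) * (inf B + inf C + 2 * t).
  by rewrite ler_wpM2l //; lra.
have t1 : t <= 1 by rewrite /N in tN; nra.
rewrite /N in tN; nra.
Qed.

Section SolutionMap.
Variables (R : realType) (X P Y : normedModType R).
Variables (F : X -> P -> set Y) (G : X -> set Y) (x0 : X) (p0 : P) (y0 : Y).
Variables (k l m : R).
Hypothesis stableFG : sum_stable F G x0 p0 y0 (- y0).
Hypothesis lipF : lipschitz_like_x F x0 p0 y0 l.
Hypothesis regF : metreg_p F x0 p0 y0 k.
Hypothesis lipG : lipschitz_like G x0 (- y0) m.

Lemma sol_map_local_bound : 0 <= k -> 0 <= m -> exists2 r : R, 0 < r &
  forall (p : P) (x x' : X), `|p - p0| < r -> `|x - x0| < r ->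
    `|x' - x0| < r -> sol_map F G p x' ->
    (dist p [set p' | sol_map F G p' x] <= (k * (l + m) * `|x - x'|)%:E)%E.
Proof.
move=> k0 m0; have [rL [rL0 lipFx]] := lipF; have [rF [rF0 regFp]] := regF.
have [rG [rG0 lipGx]] := lipG.
pose e := Num.min (rF / 2) (Num.min rL rG).
have e0 : 0 < e by rewrite !lt_min rL0 rG0 divr_gt0.
have [eF eL eG] : [/\ e <= rF / 2, e <= rL & e <= rG].
  by rewrite !ge_min !lexx !orbT.
have [d [d0 stable_d]] := stableFG e0.
(* The last bound keeps -z1 = -z2 + (z2 - z1) within rF of y0. *)
pose r := Num.min (Num.min d rL) (Num.min rG (rF / (4 * (m + 1)))).
have r0 : 0 < r.
  by rewrite !lt_min d0 rL0 rG0 divr_gt0 //; lra.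
have [rd rL' rG' rF'] : [/\ r <= d, r <= rL, r <= rG & r <= rF / (4 * (m + 1))].
  by rewrite !ge_min !lexx !orbT.
rewrite ler_pdivlMr in rF'; last lra.
have r_rF : r < rF by nra.
exists r => // p x x' hp hx hx' [y [z [Fy [Gz yz0]]]].
have [y2 [z2 [Fy2 [hy2 [Gz2 [hz2 yz20]]]]]] :
    exists y z, F x' p y /\ `|y - y0| < e /\ G x' z /\ `|z - - y0| < e /\ 0 = y + z.
  by apply: stable_d; [lra|lra|exists y, z|rewrite subrr subr0 normr0].
have [y1 [Fy1 hy1]] := lipFx x' x p ltac:(lra) ltac:(lra) ltac:(lra) y2 Fy2 ltac:(lra).
have [z1 [Gz1 hz1]] := lipGx x' x ltac:(lra) ltac:(lra) z2 Gz2 ltac:(lra).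
have hxx' : `|x' - x| <= 2 * r.
  by rewrite (le_trans (ler_distD x0 x' x)) // (distrC x0); lra.
have near_z1 : `|- z1 - y0| < rF.
  have -> : - z1 - y0 = (z2 - z1) - (z2 - - y0).
    by rewrite opprK opprD addrACA subrr add0r.
  rewrite (le_lt_trans (ler_normB _ _)) //.
  have : m * `|x' - x| <= m * (2 * r) by rewrite ler_wpM2l.
  nra.
have sol_of_F : [set p' | F x p' (- z1)] `<=` [set p' | sol_map F G p' x].
  by move=> p' Fp'; exists (- z1), z1; rewrite addNr.
have dist_z1 : (dist (- z1)%R (F x p) <= ((l + m) * `|x - x'|)%:E)%E.
  apply: le_trans (dist_le _ Fy1) _; rewrite lee_fin.
  have -> : - z1 - y1 = (y2 - y1) + (z2 - z1) by rewrite addrACA -yz20 add0r addrC.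
  by rewrite (le_trans (ler_normD _ _)) // (distrC x) mulrDl lerD.
apply: le_trans (le_dist p sol_of_F) _.
apply: le_trans (regFp x p (- z1) ltac:(lra) ltac:(lra) near_z1) _.
by rewrite -mulrA EFinM lee_wpmul2l ?lee_fin.
Qed.

Lemma sol_map_metreg : 0 <= k -> 0 <= l -> 0 <= m -> F x0 p0 y0 -> G x0 (- y0) ->
  forall eps, 0 < eps -> metreg (sol_map F G) p0 x0 (k * (l + m) + eps).
Proof.
move=> k0 l0 m0 Fx0 Gx0 eps eps0; have [r r0 bound] := sol_map_local_bound k0 m0.
apply: metreg_of_local_bound bound => //; first by rewrite mulr_ge0 ?addr_ge0.
by exists y0, (- y0); rewrite subrr.
Qed.

End SolutionMap.

Theorem theorem4p12 (R : realType) (X P Y : completeNormedModType R)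
    (F : X -> P -> set Y) (G : X -> set Y) (x0 : X) (p0 : P) (y0 : Y) :
  F x0 p0 y0 -> G x0 (- y0) ->
  sum_stable F G x0 p0 y0 (- y0) ->
  (exists r : R, 0 < r /\ forall x : X, `|x - x0| < r -> inner_sc (F x) p0 y0) ->
  (exists L : R, 0 <= L /\ lipschitz_like_x F x0 p0 y0 L) ->
  (exists L : R, 0 <= L /\ metreg_p F x0 p0 y0 L) ->
  (exists L : R, 0 <= L /\ lipschitz_like G x0 (- y0) L) ->
  (exists L : R, 0 <= L /\ metreg (sol_map F G) p0 x0 L) /\
  (reg (sol_map F G) p0 x0 <=
     reg_p F x0 p0 y0 * (lip_x F x0 p0 y0 + lip G x0 (- y0)%R))%E.
Proof.
move=> Fx0 Gx0 stableFG _ [l [l0 lipF]] [k [k0 regF]] [m [m0 lipG]].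
split.
  exists (k * (l + m) + 1); split.
    by rewrite addr_ge0 // mulr_ge0 // addr_ge0.
  exact: sol_map_metreg stableFG lipF regF lipG k0 l0 m0 Fx0 Gx0 _ ltr01.
apply: ereal_inf_le_mul_add; try by [exists k | exists l | exists m | move=> ? []].
move=> k' l' m' e [k'0 regF'] [l'0 lipF'] [m'0 lipG'] e0; split.
  by rewrite addr_ge0 ?(ltW e0) // mulr_ge0 // addr_ge0.
exact: sol_map_metreg stableFG lipF' regF' lipG' k'0 l'0 m'0 Fx0 Gx0 _ e0.
Qed.
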